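(* For every integer $g$ there is $t=t(g)$ such that for every $k\ge t$ there is a $k$-vertex exactly-$(2,t)$-degenerate bipartite graph of girth at least $g$.
   Context: A graph is exactly-$(2,t)$-degenerate if it can be obtained from a set of $t$ isolated vertices by repeatedly adding a new vertex adjacent to exactly $2$ of the existing vertices. The girth of a graph is the length of its shortest cycle (infinite if the graph has no cycle). *)

From mathcomp Require Import all_boot.
Set Implicit Arguments. Unset Strict Implicit. Unset Printing Implicit Defensive.

Definition simple_graph (T : finType) (e : rel T) : Prop :=
  symmetric e /\ irreflexive e.

Definition exactly_2t_degenerate (T : finType) (t : nat) (e : rel T) : Prop :=
  exists ord : T -> 'I_#|T|,
    injective ord /\
    (forall x y : T, ord x < t -> ord y < t -> ~~ e x y) /\
    (forall x : T, t <= ord x -> #|[set y | e x y & ord y < ord x]| = 2).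

Definition bipartite (T : finType) (e : rel T) : Prop :=
  exists c : T -> bool, forall x y : T, e x y -> c x != c y.

Definition girth_ge (T : finType) (g : nat) (e : rel T) : Prop :=
  forall c : seq T, uniq c -> 3 <= size c -> cycle e c -> g <= size c.

From mathcomp Require Import all_boot zify.
Set Implicit Arguments. Unset Strict Implicit. Unset Printing Implicit Defensive.

(* Let H be a finite digraph in which every vertex has two out-arcs with
   distinct heads.  Stack the k vertices in layers, each a copy of V(H), and join
   a vertex of layer i+1 to the copies in layer i of its two out-neighbours.  The
   layers alternate, so the graph is bipartite; the first layer is independent and
   every later vertex has exactly two earlier neighbours, so it is
   exactly-(2,|V(H)|)-degenerate; and a cycle projects to a closed
   non-backtracking walk of H of the same length.
   It remains to find H all of whose closed non-backtracking walks have length at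
   least g.  Passing to the Z/2-homology cover doubles this length: a closed
   non-backtracking walk of the cover projects to one of H using every arc an
   even number of times, and such a walk contains a cycle of H, each of whose
   (distinct) arcs it uses at least twice.  Iterating g times gives length 2^g. *)

Lemma uniq_map_inj_in (T U : eqType) (h : T -> U) (s : seq T) :
  uniq (map h s) -> {in s &, injective h}.
Proof.
elim: s => // z s IH /= /andP [hz_notin us] x y; rewrite !inE.
case/orP=> [/eqP->|xs]; case/orP=> [/eqP->|ys] // hxy.
- by move: hz_notin; rewrite hxy map_f.
- by move: hz_notin; rewrite -hxy map_f.
- exact: IH.
Qed.

Lemma leq_double_size_uniq (T : eqType) (u s : seq T) :
  uniq u -> {in u, forall a, 2 <= count_mem a s} -> 2 * size u <= size s.
Proof.
move=> uu cnt; have /count_subseqP [s' /size_subseq le_s' perm_uu] :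
    forall a, count_mem a (u ++ u) <= count_mem a s.
  move=> a; rewrite count_cat count_uniq_mem // addnn.
  by case: (boolP (a \in u)) => [/cnt|].
by rewrite -(perm_size perm_uu) size_cat addnn -mul2n in le_s'.
Qed.

Lemma next_next_neq (T : eqType) (c : seq T) x :
  uniq c -> 3 <= size c -> x \in c -> next c (next c x) != x.
Proof.
move=> uc sc xc; case: (rot_to xc) => i s cE.
rewrite -!(next_rot i uc) cE.
have : uniq (x :: s) by rewrite -cE rot_uniq.
have : 3 <= size (x :: s) by rewrite -cE size_rot.
case: s {cE} => [|y [|z s]] //= _.
rewrite !inE => /andP [/norP [nxy /norP [nxz _]]] /andP [/norP [nyz _] _].
by rewrite eqxx (eq_sym y x) (negbTE nxy) eqxx eq_sym.
Qed.

Record out2graph := Out2Graph {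
  vertex :> finType;
  succ : bool -> vertex -> vertex;
  vertex0 : vertex;
  succ_neq : forall v, succ true v != succ false v }.

Section Darts.
Variable G : out2graph.

(* The arc [(v, b)] goes from [v] to [succ b v]; a dart is an arc together with
   a direction of traversal, [true] meaning along the arc. *)
Definition arc := (G * bool)%type.
Definition dart := (arc * bool)%type.

Definition dsrc (d : dart) : G := if d.2 then d.1.1 else succ d.1.2 d.1.1.
Definition dtgt (d : dart) : G := if d.2 then succ d.1.2 d.1.1 else d.1.1.
Definition drev (d : dart) : dart := (d.1, ~~ d.2).

Definition nb_step (d e : dart) := (dtgt d == dsrc e) && (e != drev d).

Definition nb_girth_ge (g : nat) :=
  forall w : seq dart, w != [::] -> cycle nb_step w -> g <= size w.

Lemma drev_neq d : d != drev d.
Proof. by case: d => a [] /=; rewrite /drev; apply/negP => /eqP []. Qed.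

Lemma drevK : involutive drev.
Proof. by case=> a b; rewrite /drev /= negbK. Qed.

Lemma dsrc_rev d : dsrc (drev d) = dtgt d.
Proof. by case: d => [[v b] []]. Qed.

Lemma dtgt_rev d : dtgt (drev d) = dsrc d.
Proof. by case: d => [[v b] []]. Qed.

Lemma nb_cycle_uniq_dsrc x0 w : w != [::] -> sorted nb_step w ->
  dtgt (last x0 w) == dsrc (head x0 w) -> uniq (map dsrc w) -> cycle nb_step w.
Proof.
move=> + + + /uniq_map_inj_in src_inj.
case: w src_inj => // x w src_inj _ /= pw wclosed.
rewrite rcons_path pw /nb_step wclosed /=.
case: w src_inj pw wclosed => [|y w] src_inj pw wclosed; first exact: drev_neq.
apply/negP => /eqP /= x_rev.
have last_y : last y w = y.
  apply: src_inj; [by rewrite in_cons mem_last orbT | by rewrite !inE eqxx orbT |].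
  move: pw => /= /andP [/andP [/eqP <- _] _].
  by rewrite x_rev dtgt_rev.
by move: pw => /= /andP [/andP [_]]; rewrite x_rev last_y drevK eqxx.
Qed.

(* The walk may backtrack at its closing point. *)
Lemma closed_walk_sub_cycle x0 w : w != [::] -> sorted nb_step w ->
    dtgt (last x0 w) == dsrc (head x0 w) ->
  exists2 q : seq dart, {subset q <= w} &
    [/\ q != [::], cycle nb_step q & uniq (map dsrc q)].
Proof.
elim: {w}(size w).+1 {-2}w (ltnSn (size w)) => // n IH w.
rewrite ltnS => size_w wn sw wclosed.
case: (boolP (uniq (map dsrc w))) => [uw|/(uniqPn (dsrc x0)) [i [j [ltij]]]].
  by exists w; last split; rewrite // (nb_cycle_uniq_dsrc wn sw wclosed uw).
rewrite size_map => ltjw; rewrite !(nth_map x0) ?(ltn_trans ltij) // => srcij.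
pose q := take (j - i) (drop i w).
have size_q : size q = j - i by rewrite size_take size_drop ltn_sub2r ?(ltn_trans ltij).
have nth_q m : m < j - i -> nth x0 q m = nth x0 w (i + m).
  by move=> ltm; rewrite nth_take // nth_drop.
have q_closed : dtgt (last x0 q) == dsrc (head x0 q).
  rewrite -nth0 -nth_last size_q !nth_q ?subn_gt0 ?prednK ?subn_gt0 // addn0 srcij.
  have -> : i + (j - i).-1 = j.-1 by lia.
  move/(sortedP x0): sw => /(_ j.-1); rewrite prednK ?(leq_ltn_trans _ ltij) //.
  by move=> /(_ ltjw) /andP [].
have [||r sub_r rP] := IH q _ _ (take_sorted _ (drop_sorted _ sw)) q_closed.
- by rewrite size_q (leq_ltn_trans (leq_subr i j)) ?(leq_trans ltjw).
- by rewrite -size_eq0 size_q; lia.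
by exists r => // d /sub_r /mem_take /mem_drop.
Qed.

Lemma cycle_uniq_arcs q : cycle nb_step q -> uniq (map dsrc q) -> uniq (map fst q).
Proof.
move=> cq uq; rewrite map_inj_in_uniq; first exact: map_uniq uq.
move=> [a o] [a' o'] dq d'q /= eq_a; subst a'.
case: (eqVneq o o') => [->//|neq_o].
have d'E : (a, o') = drev (a, o) by case: o o' neq_o {dq d'q} => [] [].
have next_d'E : (a, o') = next q (a, o).
  move/uniq_map_inj_in: uq; apply; rewrite ?mem_next //.
  by move: (next_cycle cq dq) => /andP [/eqP <- _]; rewrite d'E dsrc_rev.
by move: (next_cycle cq dq) => /andP [_]; rewrite -next_d'E d'E eqxx.
Qed.

(* The walk contains a cycle of [G], whose arcs are distinct and each traversed
   by the walk a positive even number of times. *)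
Lemma even_closed_walk_size g w : nb_girth_ge g -> w != [::] -> cycle nb_step w ->
  (forall a, ~~ odd (count_mem a (map fst w))) -> 2 * g <= size w.
Proof.
case: w => // x w girth_g _ cw even.
move: cw; rewrite /= rcons_path => /andP [pw /andP [wclosed _]].
have [q sub_q [qn cq uq]] := closed_walk_sub_cycle (x0 := x) (w := x :: w) isT pw wclosed.
apply: leq_trans (leq_mul (leqnn 2) (girth_g q qn cq)) _.
rewrite -(size_map fst q) -[(size w).+1](size_map fst (x :: w)).
apply: leq_double_size_uniq (cycle_uniq_arcs cq uq) _ => _ /mapP [d dq ->].
have : 0 < count_mem d.1 (map fst (x :: w)).
  by rewrite -has_count has_pred1 map_f ?sub_q.
by move: (even d.1); case: (count _ _) => [|[|c]].
Qed.

End Darts.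

Section Cover.
Variable G : out2graph.

(* The Z/2-homology cover: a vertex of the cover is a vertex of [G] together with
   the parity of the number of times each arc has been traversed. *)
Definition cover_succ b (p : G * {ffun arc G -> bool}) :=
  (succ b p.1, [ffun a => p.2 a (+) (a == (p.1, b))]).

Lemma cover_succ_neq p : cover_succ true p != cover_succ false p.
Proof. by case: p => v s; apply/negP => /eqP [] /eqP; rewrite (negbTE (succ_neq v)). Qed.

Definition cover : out2graph := Out2Graph (vertex0 G, [ffun=> false]) cover_succ_neq.

Definition cover_dart (d : dart cover) : dart G := ((d.1.1.1, d.1.2), d.2).

Lemma dsrc_cover_dart (d : dart cover) : dsrc (cover_dart d) = (dsrc d).1.
Proof. by case: d => [[[v s] b] []]. Qed.

Lemma dtgt_cover_dart (d : dart cover) : dtgt (cover_dart d) = (dtgt d).1.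
Proof. by case: d => [[[v s] b] []]. Qed.

Lemma dtgt_cover_parity (d : dart cover) :
  (dtgt d).2 = [ffun a => (dsrc d).2 a (+) (a == (cover_dart d).1)].
Proof. by case: d => [[[v s] b] []]; apply/ffunP => a; rewrite !ffunE //= addbK. Qed.

Lemma nb_step_cover_dart (d e : dart cover) : nb_step d e -> nb_step (cover_dart d) (cover_dart e).
Proof.
rewrite /nb_step dsrc_cover_dart dtgt_cover_dart => /andP [/eqP de not_rev].
rewrite de eqxx /=; apply: contra not_rev.
case: d e de => [[[v s] b] o] [[[v' s'] b'] o'] /=.
rewrite /drev /cover_dart /dtgt /dsrc /= => + /eqP [ev eb eo]; subst v' b' o'.
case: o; rewrite /cover_succ /=; last by case=> ->.
case=> /ffunP ss'.
suff -> : s' = s by [].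
by apply/ffunP => a; move: (ss' a); rewrite !ffunE => /addIb.
Qed.

Lemma cover_walk_parity (x0 : dart cover) w a : path (fun d e => dtgt d == dsrc e) x0 w ->
  (dtgt (last x0 w)).2 a = (dtgt x0).2 a (+) odd (count_mem a (map fst (map cover_dart w))).
Proof.
elim: w x0 => [|y w IH] x0 /=; first by rewrite addbF.
move=> /andP [/eqP xy pw]; rewrite (IH y pw) dtgt_cover_parity ffunE -xy oddD.
by rewrite addbA eq_sym; case: eqP.
Qed.

Lemma nb_girth_cover g : nb_girth_ge G g -> nb_girth_ge cover (2 * g).
Proof.
move=> girth_g w wn cw; rewrite -(size_map cover_dart).
apply: even_closed_walk_size girth_g _ _ _; first by rewrite -size_eq0 size_map size_eq0.
  by rewrite cycle_map; apply: sub_cycle cw => d e; apply: nb_step_cover_dart.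
move=> a; case: w wn cw => // x w _ /= cw.
have closed_walk : path (fun d e => dtgt d == dsrc e) x (rcons w x).
  by apply: sub_path cw => d e /andP [].
move: (cover_walk_parity a closed_walk).
rewrite last_rcons !map_rcons -cats1 count_cat /= addn0 addnC.
by case: ((dtgt x).2 a); case: odd.
Qed.

End Cover.

Lemma nb_girth_ge1 G : nb_girth_ge G 1.
Proof. by move=> w; rewrite lt0n size_eq0. Qed.

Lemma nb_girth_iter_cover G j : nb_girth_ge (iter j cover G) (2 ^ j).
Proof.
elim: j => [|j IH]; first exact: nb_girth_ge1.
by rewrite expnS; apply: nb_girth_cover.
Qed.

Definition bool_out2graph : out2graph := @Out2Graph bool (fun b _ => b) true (fun _ => isT).

Section Layered.
Variable G : out2graph.

(* The natural number [x] encodes the copy, in layer [x %/ #|G|], of the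
   [x %% #|G|]-th vertex of [G]. *)
Definition level (x : nat) := x %/ #|G|.
Definition node (x : nat) : G := nth (vertex0 G) (enum G) (x %% #|G|).
Definition vpos (u : G) := index u (enum G).

Lemma card_out2graph_gt0 : 0 < #|G|.
Proof. by apply/card_gt0P; exists (vertex0 G). Qed.

Lemma vpos_lt u : vpos u < #|G|.
Proof. by rewrite cardE index_mem mem_enum. Qed.

Lemma level_vpos l u : level (l * #|G| + vpos u) = l.
Proof. by rewrite /level divnMDl ?card_out2graph_gt0 // divn_small ?vpos_lt ?addn0. Qed.

Lemma node_vpos l u : node (l * #|G| + vpos u) = u.
Proof. by rewrite /node modnMDl modn_small ?vpos_lt // nth_index ?mem_enum. Qed.

Lemma node_level_inj x y : level x = level y -> node x = node y -> x = y.
Proof.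
have ltG z : z %% #|G| < size (enum G) by rewrite -cardE ltn_mod card_out2graph_gt0.
move=> lxy /eqP; rewrite /node nth_uniq ?enum_uniq // => /eqP mxy.
by rewrite (divn_eq x #|G|) (divn_eq y #|G|); congr (_ * _ + _).
Qed.

Definition layer_down (x y : nat) :=
  (level x == (level y).+1) && [exists b, node y == succ b (node x)].

Definition layered k : rel 'I_k := fun x y => layer_down x y || layer_down y x.
#[global] Arguments layered : clear implicits.

Lemma layer_down_level x y : layer_down x y -> level x = (level y).+1.
Proof. by case/andP => /eqP. Qed.

Lemma layer_down_ltn x y : layer_down x y -> y < x.
Proof.
move/layer_down_level => lxy; rewrite ltnNge; apply/negP => /(leq_div2r #|G|).
by rewrite -/(level x) -/(level y) lxy ltnn.
Qed.

Lemma layered_simple k : simple_graph (layered k).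
Proof.
split=> [x y|x]; first by rewrite /layered orbC.
by rewrite /layered orbb /layer_down ltn_eqF.
Qed.

Lemma layered_bipartite k : bipartite (layered k).
Proof.
exists (fun x : 'I_k => odd (level x)) => x y.
by case/orP => /layer_down_level -> /=; case: odd.
Qed.

Definition down_nbr x b := (level x).-1 * #|G| + vpos (succ b (node x)).

Lemma down_nbr_ltn x b : 0 < level x -> down_nbr x b < x.
Proof.
move=> lx_gt0; apply: leq_trans (leq_divM x #|G|).
by rewrite -/(level x) -[level x]prednK // mulSn addnC ltn_add2l vpos_lt.
Qed.

Lemma layer_down_nbr x y : 0 < level x ->
  layer_down x y = (y == down_nbr x true) || (y == down_nbr x false).
Proof.
move=> lx_gt0; apply/idP/idP => [/andP [/eqP lxy /existsP [b /eqP nyb]]|].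
  have -> : y = down_nbr x b.
    by apply: node_level_inj; rewrite ?level_vpos ?node_vpos // lxy.
  by case: b {nyb}; rewrite eqxx ?orbT.
move=> y_nbr; rewrite /layer_down.
case/orP: y_nbr => /eqP ->; rewrite level_vpos node_vpos prednK // eqxx /=;
  by apply/existsP; eexists.
Qed.

Lemma layered_degenerate k : exactly_2t_degenerate #|G| (layered k).
Proof.
pose ord := cast_ord (esym (card_ord k)).
exists ord; split; first exact: cast_ord_inj.
split=> [x y /= x_lt y_lt|x /= x_ge].
  by rewrite /layered /layer_down /level !divn_small.
have lx_gt0 : 0 < level x by rewrite divn_gt0 ?card_out2graph_gt0.
pose nbr b : 'I_k := Ordinal (ltn_trans (down_nbr_ltn b lx_gt0) (ltn_ord x)).
have -> : [set y | layered k x y & ord y < ord x] = [set nbr true; nbr false].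
  apply/setP => y; rewrite !inE -!(inj_eq val_inj) /= -layer_down_nbr //.
  rewrite /layered; case: (ltnP y x) => [y_lt|y_ge].
    have /negbTE -> : ~~ layer_down y x.
      by apply: contraTN y_lt => /layer_down_ltn /ltnW /leq_gtF ->.
    by rewrite orbF andbT.
  rewrite andbF; apply/esym/negbTE.
  by apply: contraTN y_ge => /layer_down_ltn; rewrite ltnNge.
rewrite cards2 -(inj_eq val_inj) /=.
suff -> : down_nbr x true != down_nbr x false by [].
apply: contraNneq (succ_neq (node x)) => /(congr1 node).
by rewrite !node_vpos => ->.
Qed.

Definition edge_dart (x y : nat) : dart G :=
  if layer_down x y then ((node x, node y == succ true (node x)), true)
  else ((node y, node x == succ true (node y)), false).

Lemma succ_label (u v : G) : [exists b, v == succ b u] -> succ (v == succ true u) u = v.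
Proof. by case/existsP => -[] /eqP ->; rewrite ?eqxx // eq_sym (negbTE (succ_neq u)). Qed.

Lemma dsrc_edge_dart x y : layer_down x y || layer_down y x -> dsrc (edge_dart x y) = node x.
Proof. by rewrite /edge_dart; case: ifP => //= _ /andP [_ /succ_label]. Qed.

Lemma dtgt_edge_dart x y : layer_down x y || layer_down y x -> dtgt (edge_dart x y) = node y.
Proof. by rewrite /edge_dart; case: ifP => //= /andP [_ /succ_label]. Qed.

Lemma edge_dart_backtrack x y z :
    layer_down x y || layer_down y x -> layer_down y z || layer_down z y ->
  edge_dart y z = drev (edge_dart x y) -> z = x.
Proof.
move=> exy eyz rev_yz; apply: node_level_inj; last first.
  by rewrite -(dtgt_edge_dart eyz) rev_yz dtgt_rev dsrc_edge_dart.
have : layer_down y z = ~~ layer_down x y.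
  by move: (congr1 snd rev_yz); rewrite /edge_dart; case: ifP; case: ifP.
case: (boolP (layer_down x y)) exy => [dxy _ dyz|_ /= dyx /idP dyz].
  by rewrite dyz /= in eyz; rewrite (layer_down_level eyz) (layer_down_level dxy).
by move: (layer_down_level dyx); rewrite (layer_down_level dyz) => -[].
Qed.

(* A cycle of the layered graph, read through [edge_dart], is a closed
   non-backtracking walk of [G]: backtracking would revisit a vertex two steps later. *)
Lemma layered_girth k g : nb_girth_ge G g -> girth_ge g (layered k).
Proof.
move=> girth_g c uc sc cc.
rewrite -(size_map (fun x : 'I_k => edge_dart x (next c x))).
apply: girth_g; first by rewrite -size_eq0 size_map -lt0n (leq_trans _ sc).
rewrite cycle_map; apply: (@sub_in_cycle _ (mem c) (frel (next c))); last first.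
- exact: cycle_next.
- exact/allP.
move=> x _ xc _ /= /eqP <-.
have exy := next_cycle cc xc.
have eyz := next_cycle cc (etrans (mem_next c x) xc).
rewrite /nb_step (dtgt_edge_dart exy) (dsrc_edge_dart eyz) eqxx /=.
apply: contra (next_next_neq uc sc xc) => /eqP /(edge_dart_backtrack exy eyz) zx.
exact/eqP/val_inj.
Qed.

End Layered.

Theorem claim3p1 :
  forall g : nat, exists t : nat, forall k : nat, t <= k ->
    exists e : rel 'I_k,
      simple_graph e /\ exactly_2t_degenerate t e /\ bipartite e /\ girth_ge g e.
Proof.
move=> g; pose G := iter g cover bool_out2graph.
have girth_G : nb_girth_ge G (2 ^ g) := @nb_girth_iter_cover _ g.
exists #|G| => k _; exists (layered G k).
split; first exact: layered_simple.
split; first exact: layered_degenerate.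
split; first exact: layered_bipartite.
move=> c uc sc cc; apply: leq_trans (ltnW (ltn_expl g (ltnSn 1))) _.
exact: (layered_girth girth_G) c uc sc cc.
Qed.
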